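(* Let $I=[a,b]$ be a compact interval, $P,\tilde P:I\to\mathbb{R}^{n\times m}$ continuous with $\mathrm{rank}(P(s))=n$ for all $s\in I$, and $\Omega=c+G\mathbf{B}_p$ with $c\in\mathbb{R}^m$, $G\in\mathbb{R}^{m\times p}$, $\mathrm{rank}(G)=m$. Put $P_d(s)=\tilde P(s)-P(s)$ and assume $\sup_{s\in I}\|P_d(s)c\|\le\inf_{s\in I}\|P(s)G\|_l$. Then $$\Bigl(\int_I\tilde P(s)\,\mathrm{d}s\Bigr)(c+\alpha G\mathbf{B}_p)\subseteq\int_IP(s)\Omega\,\mathrm{d}s$$ for every $\alpha\in[0,\gamma_m]$, where $$\gamma_m=\frac{\inf_{s\in I}\|P(s)G\|_l-\sup_{s\in I}\|P_d(s)c\|}{\inf_{s\in I}\|P(s)G\|_l+\sup_{s\in I}\|P_d(s)G\|}.$$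
   Context: A norm $\|\cdot\|$ is fixed on each $\mathbb{R}^k$, $\mathbf{B}_k$ is its closed unit ball, and matrices carry induced operator norms. For $M\in\mathbb{R}^{n\times m}\setminus\{0\}$, $\|M\|_l=\max\{\mu\in\mathbb{R}:\ \forall y\in\mathrm{col}(M)\ \exists x \text{ with } Mx=y,\ \mu\|x\|\le\|y\|\}$. Set-valued integral: $\int_IF(s)W\,\mathrm{d}s=\bigcup_w\int_IF(s)w(s)\,\mathrm{d}s$, the union over all Lebesgue measurable $w:I\to W$. *)

From HB Require Import structures.
From mathcomp Require Import all_boot all_order all_algebra.
From mathcomp Require Import all_classical all_reals all_analysis.
Set Implicit Arguments. Unset Strict Implicit. Unset Printing Implicit Defensive.
Import Order.TTheory GRing.Theory Num.Theory.
Import numFieldNormedType.Exports.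
Local Open Scope classical_set_scope.
Local Open Scope ring_scope.

Definition is_norm (R : realType) (k : nat) (N : 'cV[R]_k -> R) : Prop :=
  [/\ forall x y, N (x + y) <= N x + N y,
      forall (a : R) x, N (a *: x) = `|a| * N x
    & forall x, N x = 0 -> x = 0].

Definition cball (R : realType) (nrm : forall k, 'cV[R]_k -> R) (k : nat)
  : set 'cV[R]_k := [set x | nrm k x <= 1].
Arguments cball {R} nrm k.

Definition opnorm (R : realType) (nrm : forall k, 'cV[R]_k -> R) (n m : nat)
  (M : 'M[R]_(n, m)) : R :=
  sup [set nrm n (M *m x) | x in cball nrm m].

(* ||M||_l = max { mu | forall y in col(M), exists x, M x = y /\ mu ||x|| <= ||y|| },
   written as the supremum of that set (the max exists). *)
Definition lnorm (R : realType) (nrm : forall k, 'cV[R]_k -> R) (n m : nat)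
  (M : 'M[R]_(n, m)) : R :=
  sup [set mu : R | forall y : 'cV[R]_n, (exists z, y = M *m z) ->
          exists x : 'cV[R]_m, M *m x = y /\ mu * nrm m x <= nrm n y].

Definition mx_int (R : realType) (n m : nat) (a b : R) (P : R -> 'M[R]_(n, m))
  : 'M[R]_(n, m) :=
  \matrix_(i, j) Rintegral (@lebesgue_measure R) `[a, b]%classic (fun s => P s i j).

Definition setint (R : realType) (n m : nat) (a b : R) (P : R -> 'M[R]_(n, m))
  (W : set 'cV[R]_m) : set 'cV[R]_n :=
  [set y | exists w : R -> 'cV[R]_m,
     [/\ forall j, measurable_fun `[a, b]%classic%classic (fun s => w s j 0),
         forall s, `[a, b]%classic s -> W (w s)
       & y = \col_i Rintegral (@lebesgue_measure R) `[a, b]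
                              (fun s => (P s *m w s) i 0)]].

From HB Require Import structures.
From mathcomp Require Import all_boot all_order all_algebra.
From mathcomp Require Import all_classical all_reals all_analysis.
From mathcomp Require Import ring lra.
From mathcomp Require Import measurable_realfun.
Set Implicit Arguments. Unset Strict Implicit. Unset Printing Implicit Defensive.
Import Order.TTheory GRing.Theory Num.Theory.
Import numFieldNormedType.Exports.
Local Open Scope classical_set_scope.
Local Open Scope ring_scope.

(* Fix s in I and put u = c + alpha G z with ||z|| <= 1.  Since
   Pt(s) u = P(s) (c + G (alpha z)) + Pd(s) u, it suffices to solve
   P(s) G x0 = Pd(s) u; the definition of ||.||_l yields a solution with
   L ||x0|| <= ||Pd(s) u|| <= D + alpha E, and then x = alpha z + x0 satisfies
   ||x|| <= 1 precisely because alpha <= (L - D) / (L + E).  So Pt(s) u lies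
   in P(s) Omega for every s.  The solution sets
   {x | ||x|| <= 1, P(s) G x = Pt(s) u - P(s) c} are compact, midpoint convex
   and have a closed graph in s, so picking in each the point of least
   Euclidean norm gives a measurable selection x(s); integrating
   P(s) (c + G x(s)) = Pt(s) u over I gives the claim. *)

Lemma mx_norm_entry (R : realType) k l (A : 'M[R]_(k, l)) i j : `|A i j| <= `|A|.
Proof.
by rewrite [leRHS]/Num.Def.normr /= mx_normrE; apply/bigmax_geP; right; exists (i, j).
Qed.

Lemma mx_norm_le (R : realType) k l (A : 'M[R]_(k, l)) K :
  0 <= K -> (forall i j, `|A i j| <= K) -> `|A| <= K.
Proof.
move=> K0 AK; rewrite [leLHS]/Num.Def.normr /= mx_normrE.
by apply/bigmax_leP; split => // -[i j] _; exact: AK.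
Qed.

Section MatrixContinuity.
Variable R : realType.

Definition mx_continuous (T : topologicalType) k l (F : T -> 'M[R]_(k, l)) :=
  forall i j, continuous (fun t => F t i j).

Lemma mx_continuous_cst (T : topologicalType) k l (A : 'M[R]_(k, l)) :
  mx_continuous (fun _ : T => A).
Proof. by move=> i j; exact: cst_continuous. Qed.

Lemma mx_continuous_id k l : mx_continuous (@id 'M[R]_(k, l)).
Proof. by move=> i j; exact: coord_continuous. Qed.

Lemma mx_continuous_comp (S T : topologicalType) k l (g : S -> T)
    (F : T -> 'M[R]_(k, l)) :
  continuous g -> mx_continuous F -> mx_continuous (F \o g).
Proof. by move=> cg cF i j x; exact: continuous_comp (cg x) (cF i j _). Qed.

Lemma mx_continuous_trmx (T : topologicalType) k l (F : T -> 'M[R]_(k, l)) :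
  mx_continuous F -> mx_continuous (fun t => (F t)^T).
Proof. by move=> cF i j; under eq_fun do rewrite mxE; exact: cF. Qed.

Lemma mx_continuousB (T : topologicalType) k l (F G : T -> 'M[R]_(k, l)) :
  mx_continuous F -> mx_continuous G -> mx_continuous (fun t => F t - G t).
Proof.
move=> cF cG i j; under eq_fun do rewrite !mxE.
by move=> x; apply: continuousB; [exact: cF | exact: cG].
Qed.

Lemma mx_continuous_mulmx (T : topologicalType) k l q
    (F : T -> 'M[R]_(k, l)) (G : T -> 'M[R]_(l, q)) :
  mx_continuous F -> mx_continuous G -> mx_continuous (fun t => F t *m G t).
Proof.
move=> cF cG i j; under eq_fun do rewrite mxE.
apply: (continuous_big add_continuous) => t _ x.
by apply: continuousM; [exact: cF | exact: cG].
Qed.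

Lemma mx_continuous_mulmxr (T : topologicalType) k l q (A : 'M[R]_(l, q))
    (F : T -> 'M[R]_(k, l)) :
  mx_continuous F -> mx_continuous (fun t => F t *m A).
Proof. by move=> cF; apply: mx_continuous_mulmx cF _; exact: mx_continuous_cst. Qed.

Lemma closed_mx_continuous_eq0 (T : topologicalType) k l (F : T -> 'M[R]_(k, l)) :
  mx_continuous F -> closed [set t | F t = 0].
Proof.
move=> cF.
have -> : [set t | F t = 0] = (fun t => \sum_ij `|F t ij.1 ij.2|) @^-1` [set 0].
  apply/seteqP; split => t /=.
    by move=> ->; apply: big1 => ij _; rewrite mxE normr0.
  move=> /eqP; rewrite psumr_eq0 => [/allP F0|ij _]; last exact: normr_ge0.
  apply/matrixP => i j; rewrite mxE; apply/eqP; rewrite -normr_eq0.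
  exact: (F0 (i, j) (mem_index_enum _)).
apply: (continuous_closedP _).1; last exact: closed_eq.
apply: (continuous_big add_continuous) => ij _ x.
exact: continuous_comp (cF _ _ x) (@norm_continuous _ _ _).
Qed.

Lemma mx_continuous_bounded (T : topologicalType) k l (F : T -> 'M[R]_(k, l))
    (A : set T) :
  mx_continuous F -> compact A -> exists K, forall t, A t -> `|F t| <= K.
Proof.
move=> cF cA.
have /choice [K FK] : forall ij : 'I_k * 'I_l,
    exists K, forall t, A t -> `|F t ij.1 ij.2| <= K.
  move=> [i j].
  have cAij := continuous_compact (continuous_subspaceT (cF i j)) cA.
  have [M [_ hM]] := compact_bounded cAij.
  by exists (M + 1) => t At; apply: hM; [rewrite ltrDl | exists t].
exists (\sum_ij `|K ij|) => t At.
apply: mx_norm_le => [|i j]; first exact: sumr_ge0.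
apply: le_trans (FK (i, j) t At) _; apply: le_trans (ler_norm _) _.
by rewrite (bigD1 (i, j)) //= lerDl sumr_ge0.
Qed.

Definition clamp (a b s : R) := Num.max a (Num.min s b).

Lemma clamp_in_itv (a b s : R) : a <= b -> `[a, b]%classic (clamp a b s).
Proof.
move=> ab; rewrite /= in_itv /= /clamp le_max lexx /=.
by rewrite ge_max ab ge_min lexx orbT.
Qed.

Lemma clamp_id (a b s : R) : `[a, b]%classic s -> clamp a b s = s.
Proof.
by rewrite /= in_itv /= /clamp => /andP[ha hb]; rewrite (min_idPl hb) (max_idPr ha).
Qed.

Lemma continuous_clamp (a b : R) : continuous (clamp a b).
Proof.
move=> x; apply: (@continuous_max _ _ (fun=> a) (fun s => Num.min s b)).
  exact: cvg_cst.
by apply: (@continuous_min _ _ id (fun=> b)); [exact: cvg_id | exact: cvg_cst].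
Qed.

Lemma continuous_within_clamp (a b : R) (f : R -> R) : a <= b ->
  {within `[a, b]%classic, continuous f} -> continuous (f \o clamp a b).
Proof.
move=> ab cf x.
have cfx := (proj1 (subspace_continuousP `[a, b]%classic f) cf) _ (clamp_in_itv x ab).
apply: (cvg_comp (clamp a b) f _ cfx) => U /(@continuous_clamp a b x) clampU.
have : nbhs x (fun y => `[a, b]%classic (clamp a b y) -> U (clamp a b y)) := clampU.
by apply: filterS => y; apply; exact: clamp_in_itv.
Qed.

Lemma mx_continuous_within_extension k l (a b : R) (F : R -> 'M[R]_(k, l)) :
  a <= b -> (forall i j, {within `[a, b]%classic, continuous (fun s => F s i j)}) ->
  exists2 Fc : R -> 'M[R]_(k, l), mx_continuous Fc &
    forall s, `[a, b]%classic s -> Fc s = F s.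
Proof.
move=> ab cF; exists (F \o clamp a b) => [i j|s /clamp_id /= -> //].
exact: continuous_within_clamp (cF i j).
Qed.

End MatrixContinuity.

Lemma mx_norm_mulmx (R : realType) k l q (A : 'M[R]_(k, l)) (B : 'M[R]_(l, q)) :
  `|A *m B| <= l%:R * (`|A| * `|B|).
Proof.
apply: mx_norm_le => [|i j]; first by rewrite !mulr_ge0.
rewrite mxE; apply: le_trans (ler_norm_sum _ _ _) _.
rewrite (_ : l%:R * _ = \sum_(t < l) (`|A| * `|B|)); last first.
  by rewrite sumr_const card_ord mulr_natl.
apply: ler_sum => t _.
by rewrite normrM ler_pM ?mx_norm_entry.
Qed.

Lemma mx_norm_mulmxr_le (R : realType) (T : Type) (A : set T) k l q
    (F : T -> 'M[R]_(k, l)) (B : 'M[R]_(l, q)) K :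
  (forall t, A t -> `|F t| <= K) ->
  forall t, A t -> `|F t *m B| <= l%:R * (K * `|B|).
Proof.
move=> FK t At; apply: le_trans (mx_norm_mulmx _ _) _.
by rewrite ler_wpM2l ?ler_wpM2r ?FK.
Qed.

Lemma le_sup_image (R : realType) (T : Type) (A : set T) (f : T -> R) K :
  (forall t, A t -> f t <= K) -> forall t, A t -> f t <= sup (f @` A).
Proof.
move=> fK t At; apply: sup_upper_bound; last by exists t.
by split; [exists (f t), t | exists K => _ [s As <-]; exact: fK].
Qed.

Definition is_mxnorm (R : realType) k l (N : 'M[R]_(k, l) -> R) :=
  [/\ forall x y, N (x + y) <= N x + N y,
      forall (a : R) x, N (a *: x) = `|a| * N x
    & forall x, N x = 0 -> x = 0].

Section MatrixNorm.
Variables (R : realType) (k l : nat) (N : 'M[R]_(k, l) -> R).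
Hypothesis normN : is_mxnorm N.

Lemma mxnormZ a x : N (a *: x) = `|a| * N x.
Proof. by case: normN. Qed.

Lemma ler_mxnormD x y : N (x + y) <= N x + N y.
Proof. by case: normN. Qed.

Lemma mxnorm_eq0 x : N x = 0 -> x = 0.
Proof. by case: normN => _ _; apply. Qed.

Lemma mxnorm0 : N 0 = 0.
Proof. by rewrite -(scale0r 0) mxnormZ normr0 mul0r. Qed.

Lemma mxnormN x : N (- x) = N x.
Proof. by rewrite -scaleN1r mxnormZ normrN normr1 mul1r. Qed.

Lemma mxnorm_ge0 x : 0 <= N x.
Proof.
have := ler_mxnormD x (- x); rewrite subrr mxnorm0 mxnormN -mulr2n.
by rewrite pmulrn_lge0.
Qed.

Lemma ler_mxnorm_sum (I : Type) (r : seq I) (F : I -> 'M[R]_(k, l)) :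
  N (\sum_(i <- r) F i) <= \sum_(i <- r) N (F i).
Proof.
elim: r => [|i r IHr]; first by rewrite !big_nil mxnorm0.
by rewrite !big_cons; apply: le_trans (ler_mxnormD _ _) _; rewrite lerD2l.
Qed.

Lemma ler_dist_mxnorm x y : `|N x - N y| <= N (x - y).
Proof.
have Nx : N x <= N (x - y) + N y by rewrite -{1}(subrK y x) ler_mxnormD.
have Ny : N y <= N (x - y) + N x.
  by rewrite -[x - y]opprB mxnormN -{1}(subrK x y) ler_mxnormD.
by rewrite ler_norml; apply/andP; split; lra.
Qed.

Lemma mxnorm_le_mx_norm : exists2 C, 0 <= C & forall x, N x <= C * `|x|.
Proof.
exists (\sum_i \sum_j N (delta_mx i j)).
  by apply: sumr_ge0 => i _; apply: sumr_ge0 => j _; exact: mxnorm_ge0.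
move=> x; rewrite {1}(matrix_sum_delta x) mulr_suml.
apply: le_trans (ler_mxnorm_sum _ _) _; apply: ler_sum => i _.
rewrite mulr_suml; apply: le_trans (ler_mxnorm_sum _ _) _; apply: ler_sum => j _.
by rewrite mxnormZ mulrC ler_wpM2l ?mxnorm_ge0 ?mx_norm_entry.
Qed.

Lemma continuous_mxnorm : continuous N.
Proof.
have [C C0 NC] := mxnorm_le_mx_norm.
move=> x; apply/(@cvgrPdist_lt _ _ _ _ (nbhs_filter x)) => e e0.
have eC : 0 < e / (C + 1) by rewrite divr_gt0 // ltr_wpDl.
near=> y.
apply: le_lt_trans (ler_dist_mxnorm _ _) _; apply: le_lt_trans (NC _) _.
apply: le_lt_trans (_ : _ <= (C + 1) * `|x - y|) _.
  by rewrite ler_wpM2r ?normr_ge0 ?lerDl.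
rewrite mulrC -ltr_pdivlMr; last by rewrite ltr_wpDl.
near: y; exact: (@cvgr_dist_lt _ _ _ _ (nbhs_filter x) _ _ (@cvg_id _ (nbhs x))).
Unshelve. all: by end_near. Qed.

End MatrixNorm.

Lemma is_mxnorm_trmx (R : realType) k l (N : 'M[R]_(k, l) -> R) :
  is_mxnorm N -> is_mxnorm (fun x : 'M[R]_(l, k) => N x^T).
Proof.
case=> ND NZ N0; split => [x y|a x|x /N0 /eqP].
- by rewrite linearD; exact: ND.
- by rewrite linearZ; exact: NZ.
- by rewrite trmx_eq0 => /eqP.
Qed.

Lemma mx_norm_trmx (R : realType) k l (x : 'M[R]_(k, l)) : `|x^T| = `|x|.
Proof.
apply/le_anti/andP; split; apply: mx_norm_le => // i j.
  by rewrite mxE mx_norm_entry.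
by have := mx_norm_entry x^T j i; rewrite mxE.
Qed.

Lemma compact_row_ball (R : realType) p (B : R) :
  compact [set x : 'rV[R]_p | `|x| <= B].
Proof.
apply: bounded_closed_compact.
  rewrite /= /bounded_near; near=> M => x /= xB.
  apply: le_trans xB _; near: M; apply: nbhs_pinfty_ge; exact: num_real.
exact: (continuous_closedP _).1 (@norm_continuous _ _) _ (@closed_le _ _).
Unshelve. all: by end_near.
Qed.

Lemma mx_norm_le_mxnorm (R : realType) k (N : 'cV[R]_k -> R) :
  is_mxnorm N -> exists2 c, 0 < c & forall x, `|x| <= c * N x.
Proof.
move=> normN; pose N' (v : 'rV[R]_k) := N v^T.
have normN' : is_mxnorm N' := is_mxnorm_trmx normN.
pose S := [set v : 'rV[R]_k | `|v| = 1].
have unitS x : x != 0 -> S (`|x|^-1 *: x^T).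
  by move=> x0; rewrite /S /= normrZ mx_norm_trmx normfV normr_id mulVf ?normr_eq0.
have [S0|Sempty] := pselect (S !=set0); last first.
  exists 1 => // x; rewrite mul1r; have [->|x0] := eqVneq x 0.
    by rewrite normr0 mxnorm_ge0.
  by exfalso; apply: Sempty; exists (`|x|^-1 *: x^T); exact: unitS.
have cS : compact S.
  rewrite (_ : S = [set v | `|v| <= 1] `&` S); last first.
    by apply/seteqP; split => [v Sv|v []//]; split => //; rewrite /= Sv.
  apply: compact_closedI; first exact: compact_row_ball.
  exact: (continuous_closedP _).1 (@norm_continuous _ _) _ (@closed_eq _ _).
have [v0 /set_mem Sv0 v0min] := compact_EVT_min S0 cS
  (continuous_subspaceT (continuous_mxnorm normN')).
have N'v0 : 0 < N' v0.
  rewrite lt_def mxnorm_ge0 // andbT; apply/eqP => /(mxnorm_eq0 normN') v00.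
  by move: Sv0; rewrite /S /= v00 normr0 => /esym/eqP; rewrite oner_eq0.
exists (N' v0)^-1 => [|x]; first by rewrite invr_gt0.
have [->|x0] := eqVneq x 0; first by rewrite normr0 mxnorm0 // mulr0.
have := v0min _ (mem_set (unitS x x0)).
rewrite mxnormZ // /N' trmxK normfV normr_id ler_pdivlMl ?normr_gt0 //.
by move=> xv0; rewrite mulrC ler_pdivlMr.
Qed.

Section LeastNormSelection.
Variables (R : realType) (p : nat).

Definition sqnorm (x : 'rV[R]_p) : R := \sum_j x ord0 j ^+ 2.

Lemma sqnorm_ge0 x : 0 <= sqnorm x.
Proof. by apply: sumr_ge0 => j _; exact: sqr_ge0. Qed.

Lemma sqnorm_eq0 x : sqnorm x = 0 -> x = 0.
Proof.
move=> /eqP; rewrite psumr_eq0 => [/allP x0|j _]; last exact: sqr_ge0.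
apply/matrixP => i j; rewrite ord1 mxE; apply/eqP.
by rewrite -sqrf_eq0; apply: x0; rewrite mem_index_enum.
Qed.

Lemma sqnorm_parallelogram x y :
  sqnorm (2^-1 *: (x + y)) * 4 + sqnorm (x - y) = 2 * sqnorm x + 2 * sqnorm y.
Proof.
rewrite /sqnorm mulr_suml -big_split /= !mulr_sumr -big_split /=.
by apply: eq_bigr => j _; rewrite !mxE; field.
Qed.

Lemma continuous_sqnorm : continuous sqnorm.
Proof.
apply: (continuous_big add_continuous) => j _ x.
apply: (@continuous_comp _ _ _ (fun v : 'rV[R]_p => v ord0 j) (fun r : R => r ^+ 2) x).
  exact: coord_continuous.
exact: exprn_continuous.
Qed.

Variables (I : set R) (F : R -> 'rV[R]_p -> Prop) (B : R).
Hypotheses (compactI : compact I)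
  (closed_graphF : closed [set sx | F sx.1 sx.2])
  (boundedF : forall s x, F s x -> `|x| <= B)
  (midpointF : forall s x y, F s x -> F s y -> F s (2^-1 *: (x + y)))
  (nonemptyF : forall s, I s -> exists x, F s x).

Lemma compact_fiber s : compact [set x | F s x].
Proof.
rewrite (_ : [set x | F s x] = [set x | `|x| <= B] `&` [set x | F s x]); last first.
  by apply/seteqP; split => [x Fx|x []//]; split => //; exact: boundedF Fx.
apply: compact_closedI; first exact: compact_row_ball.
apply: ((continuous_closedP (fun x => (s, x))).1 _ _ closed_graphF) => x.
exact: (@cvg_pair _ _ _ (nbhs x) (nbhs s) (nbhs x) _ _ _ (fun=> s) id (cvg_cst s) cvg_id).
Qed.

Definition least_in_fiber s x := F s x /\ forall y, F s y -> sqnorm x <= sqnorm y.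

Lemma least_in_fiber_exists s : I s -> exists x, least_in_fiber s x.
Proof.
move=> Is; have [x0 Fx0] := nonemptyF Is.
have [x /set_mem Fx xmin] := compact_EVT_min (ex_intro _ x0 Fx0) (@compact_fiber s)
  (continuous_subspaceT continuous_sqnorm).
by exists x; split => // y Fy; apply: xmin; exact/mem_set.
Qed.

(* The fibers are midpoint convex and [sqnorm] is strictly convex. *)
Lemma least_in_fiber_unique s x y :
  least_in_fiber s x -> least_in_fiber s y -> x = y.
Proof.
move=> [Fx xmin] [Fy ymin].
have xy := xmin _ (midpointF Fx Fy).
have exy : sqnorm x = sqnorm y by apply/le_anti; rewrite xmin // ymin.
have := sqnorm_parallelogram x y; rewrite -exy => par.
have /sqnorm_eq0/eqP : sqnorm (x - y) = 0.
  by apply/le_anti; rewrite sqnorm_ge0 andbT; lra.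
by rewrite subr_eq0 => /eqP.
Qed.

Definition least_sel s := xget 0 (least_in_fiber s).

Lemma least_selP s : I s -> least_in_fiber s (least_sel s).
Proof. by move=> Is; apply: xgetPex; exact: least_in_fiber_exists. Qed.

Definition fiber_meets (C : set 'rV[R]_p) (q : R) :=
  [set s | I s /\ exists x, [/\ F s x, C x & sqnorm x <= q]].

(* [fiber_meets C q] is the projection on R of a compact subset of R * 'rV_p. *)
Lemma closed_fiber_meets C q : closed C -> closed (fiber_meets C q).
Proof.
move=> closedC.
pose K := (I `*` [set x : 'rV[R]_p | `|x| <= B]) `&`
  ([set sx | F sx.1 sx.2] `&` (snd @^-1` (C `&` [set x | sqnorm x <= q]))).
have compactK : compact K.
  apply: compact_closedI; first exact: compact_setX compactI (@compact_row_ball _ _ _).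
  apply: closedI => //; apply: (continuous_closedP _).1.
    by move=> x; exact: cvg_snd.
  apply: closedI => //.
  exact: (continuous_closedP _).1 continuous_sqnorm _ (@closed_le _ _).
rewrite (_ : fiber_meets C q = fst @` K).
  apply: compact_closed; first exact: Rhausdorff.
  by apply: continuous_compact compactK; apply: continuous_subspaceT => x; exact: cvg_fst.
apply/seteqP; split.
  move=> s [Is [x [Fx Cx xq]]]; exists (s, x) => //.
  by split; [split => //; exact: boundedF Fx | split].
by move=> _ [[s x] [[/= Is _] [/= Fx [Cx xq]]] <-]; split => //; exists x.
Qed.

Lemma least_sel_gap (C : set 'rV[R]_p) s : closed C -> I s -> ~ C (least_sel s) ->
  exists2 u, sqnorm (least_sel s) < u & forall x, F s x -> C x -> u <= sqnorm x.
Proof.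
move=> closedC Is nCz; have [Fz zmin] := least_selP Is.
have [[x0 [Fx0 Cx0]]|noFC] := pselect (exists x, F s x /\ C x); last first.
  exists (sqnorm (least_sel s) + 1) => [|x Fx Cx]; first by rewrite ltrDl.
  by case: noFC; exists x.
have [y /set_mem [Fy Cy] ymin] := compact_EVT_min (ex_intro _ x0 (conj Fx0 Cx0))
  (compact_closedI (@compact_fiber s) closedC) (continuous_subspaceT continuous_sqnorm).
exists (sqnorm y) => [|x Fx Cx]; last by apply: ymin; exact/mem_set.
rewrite ltNge; apply/negP => yz; apply: nCz.
suff <- : y = least_sel s by [].
apply: least_in_fiber_unique (least_selP Is).
by split => // w Fw; apply: le_trans yz (zmin _ Fw).
Qed.

Lemma least_sel_in_closedP (C : set 'rV[R]_p) s : closed C -> I s ->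
  C (least_sel s) <->
  forall q : rat, fiber_meets setT (ratr q) s -> fiber_meets C (ratr q) s.
Proof.
move=> closedC Is; have [Fz zmin] := least_selP Is; split.
  move=> Cz q [_ [x [Fx _ xq]]]; split => //.
  by exists (least_sel s); split => //; apply: le_trans (zmin _ Fx) xq.
move=> meetsC; apply: contrapT => nCz.
have [u zu uC] := least_sel_gap closedC Is nCz.
have [q] := rat_in_itvoo zu; rewrite in_itv /= => /andP[zq qu].
have [_ [x [Fx Cx xq]]] : fiber_meets C (ratr q) s.
  by apply: meetsC; split => //; exists (least_sel s); split => //; exact: ltW.
by have := uC _ Fx Cx; rewrite leNgt => /negP; apply; exact: le_lt_trans xq qu.
Qed.

(* By [least_sel_in_closedP], the preimage of [[t, +oo[] is a countable
   Boolean combination of the closed sets [fiber_meets _ q]. *)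
Lemma measurable_least_sel j : measurable_fun I (fun s => least_sel s ord0 j).
Proof.
apply: (measurability _ (RGenCInfty.measurableE R)) => _ [_ [t ->] <-].
pose C := [set x : 'rV[R]_p | t <= x ord0 j].
have closedC : closed C.
  exact: (continuous_closedP _).1 (@coord_continuous R 1 p ord0 j) _ (@closed_ge R t).
rewrite (_ : _ `&` _ = I `&`
    \bigcap_(q : rat) (~` fiber_meets setT (ratr q) `|` fiber_meets C (ratr q))).
  apply: measurableI; first exact: compact_measurable.
  rewrite -[X in measurable X]setCK setC_bigcap; apply: measurableC.
  apply: bigcupT_measurable_rat => q; apply: measurableC.
  apply: measurableU; first apply: measurableC.
    by apply: closed_measurable; apply: closed_fiber_meets; exact: closedT.
  by apply: closed_measurable; exact: closed_fiber_meets.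
apply/seteqP; split => s [Is zt]; split => //.
  move: zt; rewrite /= in_itv /= andbT => zt q _.
  have [meetsT|] := pselect (fiber_meets setT (ratr q) s); last by left.
  by right; apply: (proj1 (least_sel_in_closedP closedC Is)).
rewrite /= in_itv /= andbT; apply: (proj2 (least_sel_in_closedP closedC Is)) => q.
by case: (zt q Logic.I).
Qed.

Lemma measurable_selection : exists x : R -> 'rV[R]_p,
  (forall s, I s -> F s (x s)) /\ forall j, measurable_fun I (fun s => x s ord0 j).
Proof.
exists least_sel; split => [s Is|]; first exact: (least_selP Is).1.
exact: measurable_least_sel.
Qed.

End LeastNormSelection.

Section MatrixIntegral.
Variable R : realType.
Local Notation mu := (@lebesgue_measure R).

Lemma Rintegral_sum (D : set R) (I : Type) (r : seq I) (f : I -> R -> R) :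
  measurable D -> (forall i, mu.-integrable D (EFin \o f i)) ->
  Rintegral mu D (fun x => \sum_(i <- r) f i x) = \sum_(i <- r) Rintegral mu D (f i).
Proof.
move=> mD intf; rewrite /Rintegral; under eq_integral do rewrite -sumEFin.
by rewrite integral_sum // -sum_fine // => i _; apply: integrable_fin_num (intf i).
Qed.

Lemma mx_int_mulmx n m (a b : R) (F : R -> 'M[R]_(n, m)) (u : 'cV[R]_m) :
  (forall i j, {within `[a, b]%classic, continuous (fun s => F s i j)}) ->
  mx_int a b F *m u = \col_i Rintegral mu `[a, b]%classic (fun s => (F s *m u) i 0).
Proof.
move=> cF; apply/matrixP => i j; rewrite ord1 !mxE.
under [X in _ = Rintegral _ _ X]eq_fun do rewrite mxE.
have intF k : mu.-integrable `[a, b]%classic (EFin \o (fun s => F s i k)).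
  exact: continuous_compact_integrable (@segment_compact _ a b) (cF i k).
rewrite Rintegral_sum //; last first.
  move=> k; rewrite (_ : EFin \o _ = (EFin \o (fun s => F s i k)) \* cst (u k 0)%:E)%E.
    exact: integrableZr.
  by apply/funext => s /=; rewrite EFinM.
by apply: eq_bigr => k _; rewrite mxE RintegralZr.
Qed.

End MatrixIntegral.

Lemma measurable_affine_col (R : realType) (I : set R) m p (c : 'cV[R]_m)
    (G : 'M[R]_(m, p)) (x : R -> 'cV[R]_p) :
  (forall j, measurable_fun I (fun s => x s j 0)) ->
  forall i, measurable_fun I (fun s => (c + G *m x s) i 0).
Proof.
move=> mx i; rewrite (_ : (fun s => _) = fun s => c i 0 + \sum_k G i k * x s k 0).
  apply: measurable_funD; first exact: measurable_cst.
  apply: measurable_sum => k; apply: measurable_funM; first exact: measurable_cst.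
  exact: mx.
by apply/funext => s; rewrite !mxE.
Qed.

Section InducedNorms.
Variables (R : realType) (nrm : forall k, 'cV[R]_k -> R).
Arguments nrm : clear implicits.
Hypothesis normP : forall k, is_norm (nrm k).

Let normK k : is_mxnorm (nrm k) := normP k.

Lemma ball_image_le_mx_norm n p : exists2 C, 0 <= C &
  forall (Y : 'M[R]_(n, p)) x, cball nrm p x -> nrm n (Y *m x) <= C * `|Y|.
Proof.
have [Cn Cn0 nrmCn] := mxnorm_le_mx_norm (normK n).
have [cp cp0 nrmcp] := mx_norm_le_mxnorm (normK p).
exists (Cn * (p%:R * cp)) => [|Y x x1]; first by rewrite !mulr_ge0 // ltW.
apply: le_trans (nrmCn _) _; rewrite -mulrA ler_wpM2l //.
apply: le_trans (mx_norm_mulmx _ _) _; rewrite -mulrA ler_wpM2l //.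
rewrite mulrC ler_wpM2r //; apply: le_trans (nrmcp x) _.
by rewrite -[leRHS]mulr1 ler_wpM2l // ltW.
Qed.

Lemma opnorm_ub n p (Y : 'M[R]_(n, p)) x :
  cball nrm p x -> nrm n (Y *m x) <= opnorm nrm Y.
Proof.
have [C _ YC] := ball_image_le_mx_norm n p.
by move=> x1; apply: (le_sup_image (YC Y)).
Qed.

Lemma opnorm_ge0 n p (Y : 'M[R]_(n, p)) : 0 <= opnorm nrm Y.
Proof.
have := @opnorm_ub n p Y 0; rewrite mulmx0 mxnorm0 //; apply.
by rewrite /cball /= mxnorm0.
Qed.

Lemma opnorm_le_mx_norm n p :
  exists2 C, 0 <= C & forall Y : 'M[R]_(n, p), opnorm nrm Y <= C * `|Y|.
Proof.
have [C C0 YC] := ball_image_le_mx_norm n p.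
exists C => // Y; apply: ge_sup.
  by exists (nrm n (Y *m 0)), 0; rewrite // /cball /= mxnorm0.
by move=> _ [x x1 <-]; exact: YC.
Qed.

Lemma nrm_mulmx_le_sup (T : Type) (A : set T) n m (F : T -> 'M[R]_(n, m))
    (v : 'cV[R]_m) K :
  (forall t, A t -> `|F t| <= K) ->
  forall t, A t -> nrm n (F t *m v) <= sup [set nrm n (F s *m v) | s in A].
Proof.
have [C C0 nrmC] := mxnorm_le_mx_norm (normK n).
move=> /(mx_norm_mulmxr_le v) FvK.
apply: (le_sup_image (K := C * (m%:R * (K * `|v|)))) => t At.
by apply: le_trans (nrmC _) _; rewrite ler_wpM2l ?FvK.
Qed.

Lemma opnorm_le_sup (T : Type) (A : set T) n p (F : T -> 'M[R]_(n, p)) K :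
  (forall t, A t -> `|F t| <= K) ->
  forall t, A t -> opnorm nrm (F t) <= sup [set opnorm nrm (F s) | s in A].
Proof.
have [C C0 opC] := opnorm_le_mx_norm n p.
move=> FK; apply: (le_sup_image (K := C * K)) => t At.
by apply: le_trans (opC _) _; rewrite ler_wpM2l // FK.
Qed.

Lemma lnorm_ge0 n p (M : 'M[R]_(n, p)) : 0 <= lnorm nrm M.
Proof.
rewrite /lnorm; set S := [set mu : R | _].
have [supS|] := pselect (has_sup S); last by move/sup_out ->.
apply: (sup_upper_bound supS) => y [z ->]; exists z; split => //.
by rewrite mul0r mxnorm_ge0.
Qed.

Lemma lt_lnorm_preimage n p (M : 'M[R]_(n, p)) (y : 'cV[R]_n) mu :
  mu < lnorm nrm M -> (exists z, y = M *m z) ->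
  exists x, M *m x = y /\ mu * nrm p x <= nrm n y.
Proof.
rewrite /lnorm; set S := [set mu : R | _] => muS [z yz].
have [supS|/sup_out S0] := pselect (has_sup S); last first.
  exists z; split => //; apply: le_trans (mxnorm_ge0 (normK n) y).
  by rewrite mulr_le0_ge0 ?mxnorm_ge0 // ltW // -S0.
have /sup_adherent/(_ supS) [mu' Smu' mumu'] : 0 < sup S - mu by rewrite subr_gt0.
have [x [Mx xmu']] := Smu' y (ex_intro _ z yz); exists x; split => //.
apply: le_trans xmu'; rewrite ler_wpM2r ?mxnorm_ge0 //.
by move: mumu'; rewrite opprB addrC subrK => /ltW.
Qed.

(* The supremum defining [lnorm] is attained: take a preimage of least norm in
   a compact piece of the affine preimage space. *)
Lemma lnorm_preimage n p (M : 'M[R]_(n, p)) (y : 'cV[R]_n) L :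
  0 < L -> L <= lnorm nrm M -> (exists z, y = M *m z) ->
  exists x, M *m x = y /\ L * nrm p x <= nrm n y.
Proof.
move=> L0 LM ycol.
have near_opt mu : mu < L -> exists x, M *m x = y /\ mu * nrm p x <= nrm n y.
  by move=> muL; apply: lt_lnorm_preimage ycol; exact: lt_le_trans LM.
have normT := is_mxnorm_trmx (normK p).
pose r := 2 * nrm n y / L.
pose K := [set v : 'rV[R]_p | M *m v^T = y /\ nrm p v^T <= r].
have inK x : M *m x = y -> L / 2 * nrm p x <= nrm n y -> K x^T.
  by move=> Mx xL; rewrite /K /= trmxK; split => //; rewrite /r ler_pdivlMr //; nra.
have [c c0 normc] := mx_norm_le_mxnorm (normK p).
have compactK : compact K.
  rewrite (_ : K = [set v | `|v| <= c * r] `&` K); last first.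
    apply/seteqP; split => [v Kv|v []//]; split => //=.
    rewrite -mx_norm_trmx; apply: le_trans (normc _) _.
    by rewrite ler_wpM2l ?(ltW c0) //; case: Kv.
  apply: compact_closedI; first exact: compact_row_ball.
  rewrite (_ : K = [set v | M *m v^T - y = 0] `&`
      ((fun v : 'rV[R]_p => nrm p v^T) @^-1` [set t | t <= r])); last first.
    apply/seteqP; split => v /= [Mv vr]; split => //; first by rewrite Mv subrr.
    by apply/eqP; rewrite -subr_eq0 Mv.
  apply: closedI; last first.
    exact: (continuous_closedP _).1 (continuous_mxnorm normT) _ (@closed_le _ _).
  apply: closed_mx_continuous_eq0; apply: mx_continuousB; last exact: mx_continuous_cst.
  apply: mx_continuous_mulmx; first exact: mx_continuous_cst.
  exact: (@mx_continuous_trmx R _ 1 p id (@mx_continuous_id R 1 p)).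
have [x1 [Mx1 x1y]] := near_opt (L / 2) ltac:(lra).
have [v /set_mem [Mv vr] vmin] := compact_EVT_min (ex_intro _ _ (inK _ Mx1 x1y))
  compactK (continuous_subspaceT (continuous_mxnorm normT)).
exists v^T; split => //; rewrite leNgt; apply/negP => yLv.
have v0 : 0 < nrm p v^T.
  by rewrite -(pmulr_rgt0 _ L0); apply: le_lt_trans yLv; exact: mxnorm_ge0.
pose t := nrm n y / nrm p v^T.
have tv : t * nrm p v^T = nrm n y by rewrite /t divfK ?gt_eqF.
have tL : t < L by rewrite /t ltr_pdivrMr // mulrC.
have t0 : 0 <= t by rewrite divr_ge0 // mxnorm_ge0.
have [x [Mx xy]] := near_opt ((t + L) / 2) ltac:(lra).
have vx : nrm p v^T <= nrm p x.
  have := vmin x^T; rewrite trmxK; apply; apply/mem_set; apply: inK => //.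
  by apply: le_trans xy; rewrite ler_wpM2r ?mxnorm_ge0 //; lra.
have : (t + L) / 2 * nrm p v^T <= nrm n y.
  by apply: le_trans xy; rewrite ler_wpM2l //; lra.
nra.
Qed.


(* If [L = 0], the hypotheses force [D = alpha = 0] (recall [x / 0 = 0]),
   hence [y = 0]. *)
Lemma ball_shifted_preimage n p (M : 'M[R]_(n, p)) (y : 'cV[R]_n) (z : 'cV[R]_p)
    (L D E alpha : R) :
  row_free M -> L <= lnorm nrm M -> 0 <= D <= L -> 0 <= E ->
  0 <= alpha <= (L - D) / (L + E) -> nrm p z <= 1 -> nrm n y <= D + alpha * E ->
  exists2 x, nrm p x <= 1 & M *m x = alpha *: (M *m z) + y.
Proof.
move=> Mfree LM /andP[D0 DL] E0 /andP[alpha0 alphaL] z1 yDE.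
have [L0|L0] := eqVneq L 0.
  have D00 : D = 0 by apply/le_anti; rewrite D0 -L0 DL.
  have alpha00 : alpha = 0.
    by apply/le_anti; rewrite alpha0 andbT; move: alphaL; rewrite L0 D00 subrr mul0r.
  have -> : y = 0.
    apply: (mxnorm_eq0 (normK n)); apply/le_anti; rewrite mxnorm_ge0 // andbT.
    by move: yDE; rewrite D00 alpha00 mul0r addr0.
  exists 0; first by rewrite mxnorm0.
  by rewrite alpha00 scale0r mulmx0 addr0.
have {L0}Lpos : 0 < L by rewrite lt_def L0 (le_trans D0 DL).
have [B MB] := row_freeP Mfree.
have ycol : exists x, y = M *m x by exists (B *m y); rewrite mulmxA MB mul1mx.
have [x0 [Mx0 x0y]] := lnorm_preimage Lpos LM ycol.
exists (alpha *: z + x0); last by rewrite mulmxDr -scalemxAr Mx0.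
have aLE : alpha * (L + E) <= L - D by rewrite -ler_pdivlMr ?ltr_wpDr.
have x0a : nrm p x0 <= 1 - alpha.
  by rewrite -(ler_pM2l Lpos); lra.
apply: le_trans (ler_mxnormD (normK p) _ _) _; rewrite mxnormZ // ger0_norm //.
have : alpha * nrm p z <= alpha by rewrite -[leRHS]mulr1 ler_wpM2l.
lra.
Qed.

Lemma perturbed_solution_in_ball n m p (Q Qt : 'M[R]_(n, m)) (c : 'cV[R]_m)
    (G : 'M[R]_(m, p)) (z : 'cV[R]_p) (L D E alpha : R) :
  row_free (Q *m G) -> L <= lnorm nrm (Q *m G) -> D <= L ->
  nrm n ((Qt - Q) *m c) <= D -> opnorm nrm ((Qt - Q) *m G) <= E ->
  0 <= alpha <= (L - D) / (L + E) -> nrm p z <= 1 ->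
  exists2 x, nrm p x <= 1 & Q *m (c + G *m x) = Qt *m (c + alpha *: (G *m z)).
Proof.
move=> QGfree LQG DL cD GE alphaP z1.
have D0 : 0 <= D := le_trans (mxnorm_ge0 (normK n) _) cD.
have E0 : 0 <= E := le_trans (opnorm_ge0 _) GE.
have alpha0 : 0 <= alpha by case/andP: alphaP.
have Qdu : nrm n ((Qt - Q) *m (c + alpha *: (G *m z))) <= D + alpha * E.
  rewrite mulmxDr -scalemxAr mulmxA; apply: le_trans (ler_mxnormD (normK n) _ _) _.
  rewrite mxnormZ // ger0_norm // lerD // ler_wpM2l //.
  exact: le_trans (opnorm_ub _ z1) GE.
have DP : 0 <= D <= L by rewrite D0 DL.
have [x x1 QGx] := ball_shifted_preimage QGfree LQG DP E0 alphaP z1 Qdu.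
exists x => //; rewrite mulmxDr mulmxA QGx mulmxBl [Q *m (c + _)]mulmxDr.
by rewrite -scalemxAr mulmxA addrA addrC subrK.
Qed.

Lemma closed_ball_solution_graph n p (M : R -> 'M[R]_(n, p)) (r : R -> 'cV[R]_n) :
  mx_continuous M -> mx_continuous r ->
  closed [set sv : R * 'rV[R]_p | nrm p sv.2^T <= 1 /\ M sv.1 *m sv.2^T = r sv.1].
Proof.
move=> cM cr.
rewrite (_ : [set sv | _] =
    ((fun sv : R * 'rV[R]_p => nrm p sv.2^T) @^-1` [set t | t <= 1]) `&`
    [set sv | M sv.1 *m sv.2^T - r sv.1 = 0]); last first.
  apply/seteqP; split => sv /= [sv1 sv2]; split => //; first by rewrite sv2 subrr.
  by apply/eqP; rewrite -subr_eq0 sv2.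
have cfst : continuous (@fst R 'rV[R]_p) by move=> ?; exact: cvg_fst.
have csnd : continuous (@snd R 'rV[R]_p) by move=> ?; exact: cvg_snd.
apply: closedI.
  apply: (continuous_closedP _).1 _ _ (@closed_le _ _) => sv.
  apply: (@continuous_comp _ _ _ snd (fun v : 'rV[R]_p => nrm p v^T)); first exact: csnd.
  exact: (continuous_mxnorm (is_mxnorm_trmx (normK p))).
apply: closed_mx_continuous_eq0; apply: mx_continuousB.
  apply: mx_continuous_mulmx; first exact: mx_continuous_comp cfst cM.
  exact: mx_continuous_trmx (mx_continuous_comp csnd (@mx_continuous_id R 1 p)).
exact: mx_continuous_comp cfst cr.
Qed.

Lemma measurable_ball_solution n p (I : set R) (M : R -> 'M[R]_(n, p))
    (r : R -> 'cV[R]_n) :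
  compact I -> mx_continuous M -> mx_continuous r ->
  (forall s, I s -> exists2 x, nrm p x <= 1 & M s *m x = r s) ->
  exists2 x : R -> 'cV[R]_p, (forall j, measurable_fun I (fun s => x s j 0)) &
    forall s, I s -> nrm p (x s) <= 1 /\ M s *m x s = r s.
Proof.
move=> compactI cM cr solvable.
have [c c0 normc] := mx_norm_le_mxnorm (normK p).
pose F s (v : 'rV[R]_p) := nrm p v^T <= 1 /\ M s *m v^T = r s.
have boundedF s v : F s v -> `|v| <= c.
  move=> [v1 _]; rewrite -mx_norm_trmx; apply: le_trans (normc _) _.
  by rewrite -[leRHS]mulr1 ler_wpM2l // ltW.
have midpointF s v w : F s v -> F s w -> F s (2^-1 *: (v + w)).
  move=> [v1 Mv] [w1 Mw]; split; rewrite linearZ linearD /=.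
    rewrite mxnormZ // ger0_norm; last by rewrite invr_ge0.
    apply: le_trans (ler_wpM2l _ (ler_mxnormD (normK p) _ _)) _.
      by rewrite invr_ge0.
    lra.
  rewrite -scalemxAr mulmxDr Mv Mw scalerDr -scalerDl.
  by rewrite (_ : 2^-1 + 2^-1 = 1) ?scale1r //; lra.
have nonemptyF s : I s -> exists v, F s v.
  by move=> /solvable [v v1 Mv]; exists v^T; rewrite /F trmxK.
have [x [Fx mx]] := measurable_selection compactI
  (closed_ball_solution_graph cM cr) boundedF midpointF nonemptyF.
exists (fun s => (x s)^T) => [j|s Is]; last exact: Fx.
by under eq_fun do rewrite mxE; exact: mx.
Qed.

End InducedNorms.


Theorem lemma8 (R : realType) (nrm : forall k, 'cV[R]_k -> R)
  (hnrm : forall k, is_norm (nrm k))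
  (n m p : nat) (a b : R) (hab : a <= b)
  (P Pt : R -> 'M[R]_(n, m))
  (hP : forall i j, {within `[a, b]%classic, continuous (fun s => P s i j)})
  (hPt : forall i j, {within `[a, b]%classic, continuous (fun s => Pt s i j)})
  (hrk : forall s, a <= s <= b -> \rank (P s) = n)
  (c : 'cV[R]_m) (G : 'M[R]_(m, p)) (hG : \rank G = m) :
  let Pd := fun s => Pt s - P s in
  let L := inf [set lnorm nrm (P s *m G) | s in `[a, b]%classic] in
  let D := sup [set nrm n (Pd s *m c) | s in `[a, b]%classic] in
  let E := sup [set opnorm nrm (Pd s *m G) | s in `[a, b]%classic] in
  let Omega := [set c + G *m z | z in cball nrm p] in
  D <= L ->
  forall alpha : R, 0 <= alpha <= (L - D) / (L + E) ->
  [set mx_int a b Pt *m (c + alpha *: (G *m z)) | z in cball nrm p]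
    `<=` setint a b P Omega.
Proof.
move=> Pd L D E Omega DL alpha alphaP _ [z z1 <-].
have Ia : `[a, b]%classic a by rewrite /= in_itv /= lexx hab.
have [Pc cPc PcE] := mx_continuous_within_extension hab hP.
have [Ptc cPtc PtcE] := mx_continuous_within_extension hab hPt.
have [K PdK] : exists K, forall s, `[a, b]%classic s -> `|Pd s| <= K.
  have [K PdcK] :=
    mx_continuous_bounded (mx_continuousB cPtc cPc) (@segment_compact _ a b).
  by exists K => s Is; rewrite /Pd -PcE // -PtcE //; exact: PdcK.
have PdD := nrm_mulmx_le_sup hnrm c PdK.
have PdE := opnorm_le_sup hnrm (mx_norm_mulmxr_le G PdK).
set u := c + alpha *: (G *m z).
have solvable s : `[a, b]%classic s ->
    exists2 x, nrm p x <= 1 & Pc s *m G *m x = Ptc s *m u - Pc s *m c.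
  move=> Is; rewrite PcE // PtcE //.
  have PGfree : row_free (P s *m G).
    by rewrite /row_free mxrankMfree ?hrk;
      [|move: Is; rewrite /= in_itv | rewrite /row_free hG].
  have LPG : L <= lnorm nrm (P s *m G).
    by apply: ge_inf; [exists 0 => _ [t _ <-]; exact: lnorm_ge0 | exists s].
  have [x x1 Px] :=
    perturbed_solution_in_ball hnrm PGfree LPG DL (PdD s Is) (PdE s Is) alphaP z1.
  by exists x => //; rewrite -Px mulmxDr mulmxA addrAC subrr add0r.
have [x mx xsol] := measurable_ball_solution hnrm (@segment_compact _ a b)
  (mx_continuous_mulmxr (A := G) cPc)
  (mx_continuousB (mx_continuous_mulmxr (A := u) cPtc)
                  (mx_continuous_mulmxr (A := c) cPc))
  solvable.
exists (fun s => c + G *m x s); split.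
- exact: measurable_affine_col.
- by move=> s Is; exists (x s) => //; case: (xsol s Is).
rewrite mx_int_mulmx //; apply/matrixP => i j; rewrite !mxE.
apply: eq_Rintegral => s /set_mem Is; have [_] := xsol s Is.
by rewrite PcE // PtcE // => PGx; rewrite [P s *m _]mulmxDr mulmxA PGx addrC subrK.
Qed.
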